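(* Let $S\subseteq[n]$. A matrix $\Delta\in\mathbb{R}^{n\times n}$ with $\Delta e_j=0$ for all $j\notin S$ is a Nash equilibrium for $(M,\Gamma,\Sigma,S)$ if and only if its columns $\delta_k=\Delta e_k$, $k\in S$, solve the system of $n|S|$ linear equations $$T^{(k,k)}\delta_k+\sum_{j\in S,\ j\neq k}T^{(k,j)}\delta_j=y_k\qquad\text{for all }k\in S.$$
   Context: Fix agents $[n]=\{1,\dots,n\}$. Let $\Sigma\in\mathbb{R}^{n\times n}$ be symmetric positive definite, $\Gamma=\mathrm{diag}(\gamma_1,\dots,\gamma_n)$ with all $\gamma_i>0$, and let $M\in\mathbb{R}^{n\times n}$ be the matrix of true beliefs with $i$-th column $\mu_i=Me_i$. For a matrix of reported negotiating positions $M'\in\mathbb{R}^{n\times n}$, the stable point for $M'$ is the unique pair $(W,P)$ of real $n\times n$ matrices with $W=W^T$, $P^T=-P$ and $M'-P=2\Sigma W\Gamma$; equivalently $\mathrm{vec}(W)=\tfrac12(\Gamma\otimes\Sigma+\Sigma\otimes\Gamma)^{-1}\mathrm{vec}(M'+M'^T)$ and $P=M'-2\Sigma W\Gamma$. Here $\mathrm{vec}$ stacks columns and $e_i$ is the $i$-th standard basis vector. Agent $i$'s (true) utility at $(W,P)$ is $g_i(W,P)=w_i^T(\mu_i-Pe_i)-\gamma_i\, w_i^T\Sigma w_i$, where $w_i=We_i$. $S\subseteq[n]$ is the set of strategic agents; honest agents $i\notin S$ report $\mu_i'=\mu_i$. A Nash equilibrium for $(M,\Gamma,\Sigma,S)$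 is a matrix $\Delta$ with $\Delta e_j=0$ for $j\notin S$ such that for each $k\in S$, when every $j\in S\setminus\{k\}$ reports $(M+\Delta)e_j$, agent $k$'s utility at the stable point is maximized (over all reports $\mu_k'\in\mathbb{R}^n$) by reporting $(M+\Delta)e_k$. Matrices: $\Pi\in\mathbb{R}^{n^2\times n^2}$ is the commutation matrix, $\Pi\,\mathrm{vec}(X)=\mathrm{vec}(X^T)$; $\Pi_k\in\mathbb{R}^{n\times n^2}$ satisfies $\Pi_k\mathrm{vec}(X)=Xe_k$. For $Z\in\mathbb{R}^{n^2\times n^2}$, $Z^{(p,q)}$ is its $n\times n$ block in block-row $p$ and block-column $q$. Set $K=\Gamma\otimes\Sigma+\Sigma\otimes\Gamma$, $L=\tfrac12(K^{-1}+K^{-1}\Pi)$, $T^{(k,k)}=L^{(k,k)}+(L^{(k,k)})^T-2\gamma_k(L^{(k,k)})^T\Sigma L^{(k,k)}$, $T^{(k,j)}=(I-2\gamma_k(L^{(k,k)})^T\Sigma)L^{(k,j)}$ for $j\neq k$, and $y_k=\tfrac12\big(2\gamma_k(L^{(k,k)})^T\Sigma-I\big)\Pi_kK^{-1}\mathrm{vec}(M+M^T)$. *)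

From mathcomp Require Import all_boot all_order all_algebra.
Set Implicit Arguments. Unset Strict Implicit. Unset Printing Implicit Defensive.
Import Order.TTheory GRing.Theory Num.Theory.
Local Open Scope ring_scope.

Section Defs.
Variables (R : realFieldType) (n : nat).

(* Index convention: the entry (i,j) of an n x n matrix X sits at position
   mxvec_index j i (= j*n + i) of vec X, i.e. vec stacks columns. *)

Definition vec (X : 'M[R]_n) : 'cV[R]_(n * n) := (mxvec X^T)^T.
Definition unvec (v : 'cV[R]_(n * n)) : 'M[R]_n := (vec_mx v^T)^T.

(* Kronecker product A (x) B : block (p,q) is A p q *: B *)
Definition kron (A B : 'M[R]_n) : 'M[R]_(n * n) :=
  \sum_(p < n) \sum_(q < n) \sum_(i < n) \sum_(j < n)
     (A p q * B i j) *: delta_mx (mxvec_index p i) (mxvec_index q j).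

(* commutation matrix: Pi *m vec X = vec X^T *)
Definition commPi : 'M[R]_(n * n) :=
  \sum_(a < n) \sum_(b < n) delta_mx (mxvec_index a b) (mxvec_index b a).

(* Pi_k : Pi_k *m vec X = X *m e_k (the k-th column of X) *)
Definition commPik (k : 'I_n) : 'M[R]_(n, n * n) :=
  \sum_(i < n) delta_mx i (mxvec_index k i).

Definition blk (Z : 'M[R]_(n * n)) (p q : 'I_n) : 'M[R]_n :=
  \matrix_(a, b) Z (mxvec_index p a) (mxvec_index q b).

Definition ev (i : 'I_n) : 'cV[R]_n := delta_mx i 0.

Variables (Sigma : 'M[R]_n) (gamma : 'I_n -> R).

Definition Gam : 'M[R]_n := diag_mx (\row_i gamma i).

Definition Kmx : 'M[R]_(n * n) := kron Gam Sigma + kron Sigma Gam.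

Definition Lmx : 'M[R]_(n * n) := 2^-1 *: (invmx Kmx + invmx Kmx *m commPi).

(* the stable point (W,P) for reported positions M' *)
Definition stableW (M' : 'M[R]_n) : 'M[R]_n :=
  unvec (2^-1 *: (invmx Kmx *m vec (M' + M'^T))).
Definition stableP (M' : 'M[R]_n) : 'M[R]_n :=
  M' - 2%:R *: (Sigma *m stableW M' *m Gam).

(* true utility of agent i, mu_i = M e_i *)
Definition utility (M : 'M[R]_n) (i : 'I_n) (W P : 'M[R]_n) : R :=
  let w := W *m ev i in
  ((w^T *m (M *m ev i - P *m ev i)) 0 0)
  - gamma i * ((w^T *m Sigma *m w) 0 0).

Definition set_col (A : 'M[R]_n) (k : 'I_n) (v : 'cV[R]_n) : 'M[R]_n :=
  \matrix_(a, b) (if b == k then v a 0 else A a b).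

Definition util_at (M : 'M[R]_n) (i : 'I_n) (M' : 'M[R]_n) : R :=
  utility M i (stableW M') (stableP M').

Definition NashEq (M : 'M[R]_n) (S : {set 'I_n}) (Delta : 'M[R]_n) : Prop :=
  (forall j, j \notin S -> Delta *m ev j = 0) /\
  forall k, k \in S -> forall mu' : 'cV[R]_n,
    util_at M k (set_col (M + Delta) k mu') <= util_at M k (M + Delta).

Definition Tblk (k j : 'I_n) : 'M[R]_n :=
  if j == k then
    blk Lmx k k + (blk Lmx k k)^T
      - (2%:R * gamma k) *: ((blk Lmx k k)^T *m Sigma *m blk Lmx k k)
  else (1%:M - (2%:R * gamma k) *: ((blk Lmx k k)^T *m Sigma)) *m blk Lmx k j.

Definition yvec (M : 'M[R]_n) (k : 'I_n) : 'cV[R]_n :=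
  2^-1 *: (((2%:R * gamma k) *: ((blk Lmx k k)^T *m Sigma) - 1%:M)
             *m commPik k *m invmx Kmx *m vec (M + M^T)).

End Defs.
Arguments ev {R n}.

(* The stable point depends linearly on the reports: column k of W is
   sum_q L^(k,q) M' e_q.  Hence agent k's utility, as a function of its own
   report x, is the quadratic w^T (mu_k - x) + gamma_k w^T Sigma w with
   w = L^(k,k) x + c, and its Hessian is -T^(k,k).  This matrix is positive
   semidefinite: for X = x e_k^T, the Lyapunov equation
   Sigma W Gamma + Gamma W Sigma = (X + X^T)/2 and the symmetry of W = W(X)
   give x^T L^(k,k) x = tr (X^T W) = 2 sum_i gamma_i w_i^T Sigma w_i with
   w_i = W e_i and w = w_k, which dominates 2 gamma_k w^T Sigma w.  So a
   report is a best response exactly when the gradient vanishes, and this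
   first-order condition rearranges into the k-th block row of the linear
   system.  The same trace identity shows that K is invertible. *)

From mathcomp Require Import all_boot all_order all_algebra.
From mathcomp Require Import ring lra.
Import Order.TTheory GRing.Theory Num.Theory.
Set Implicit Arguments. Unset Strict Implicit. Unset Printing Implicit Defensive.
Local Open Scope ring_scope.

Lemma iff_eq_subr (V : zmodType) (x y x' y' : V) :
  x - y = x' - y' -> (x = y <-> x' = y').
Proof.
move=> E; split=> [xy|xy']; apply/subr0_eq; last by rewrite E xy' subrr.
by rewrite -E xy subrr.
Qed.

Section Vectorization.
Variables (R : realFieldType) (n : nat).
Implicit Types (X Y : 'M[R]_n) (Z : 'M[R]_(n * n)).

Lemma big_mxvec_index (F : 'I_(n * n) -> R) :
  \sum_(l < n * n) F l = \sum_(q < n) \sum_(b < n) F (mxvec_index q b).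
Proof.
rewrite pair_big /= (reindex _ (curry_mxvec_bij n n)) /=.
by apply: eq_bigr => -[q b].
Qed.

Lemma eq_mxvec_index (p q a b : 'I_n) :
  (mxvec_index p a == mxvec_index q b) = (p == q) && (a == b).
Proof.
apply/eqP/andP => [/cast_ord_inj/enum_rank_inj [-> ->] | [/eqP-> /eqP->]] //.
Qed.

Lemma vecE X q b : vec X (mxvec_index q b) 0 = X b q.
Proof. by rewrite /vec mxE mxvecE mxE. Qed.

Lemma cV_mxvec_indexP (u v : 'cV[R]_(n * n)) :
  (forall p a, u (mxvec_index p a) 0 = v (mxvec_index p a) 0) -> u = v.
Proof.
move=> uv; apply/matrixP => i j; rewrite [j]ord1.
by case/mxvec_indexP: i => p a; apply: uv.
Qed.

Lemma vecD X Y : vec (X + Y) = vec X + vec Y.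
Proof. by rewrite /vec !linearD. Qed.

Lemma vecZ c X : vec (c *: X) = c *: vec X.
Proof. by rewrite /vec !linearZ. Qed.

Lemma vec0 : vec (0 : 'M[R]_n) = 0.
Proof. by rewrite /vec !linear0. Qed.

Lemma unvecK : cancel (@vec R n) (@unvec R n).
Proof. by move=> X; rewrite /unvec /vec trmxK mxvecK trmxK. Qed.

Lemma vecK : cancel (@unvec R n) (@vec R n).
Proof. by move=> v; rewrite /unvec /vec trmxK vec_mxK trmxK. Qed.

Lemma vec_inj : injective (@vec R n).
Proof. exact: can_inj unvecK. Qed.

Lemma mul_evE (A : 'M[R]_n) q b : (A *m ev q) b 0 = A b q.
Proof. by rewrite -colE mxE. Qed.

Lemma evT_mulmx_evE (Z : 'M[R]_n) i j : ((ev i)^T *m Z *m ev j) 0 0 = Z i j.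
Proof. by rewrite trmx_delta -rowE -colE !mxE. Qed.

Lemma mulmx_vecE Z X p a :
  (Z *m vec X) (mxvec_index p a) 0 =
  \sum_(q < n) \sum_(b < n) Z (mxvec_index p a) (mxvec_index q b) * X b q.
Proof.
rewrite mxE big_mxvec_index; apply: eq_bigr => q _; apply: eq_bigr => b _.
by rewrite vecE.
Qed.

Lemma kronE (A B : 'M[R]_n) p i q j :
  kron A B (mxvec_index p i) (mxvec_index q j) = A p q * B i j.
Proof.
have delta_off p' i' q' j' : (p' != p) || (i' != i) || (q' != q) || (j' != j) ->
    delta_mx (mxvec_index p' i') (mxvec_index q' j') (mxvec_index p i)
      (mxvec_index q j) = 0 :> R.
  move=> off; rewrite mxE !eq_mxvec_index; apply/eqP; rewrite pnatr_eq0 eqb0.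
  by apply: contraTN off => /andP[/andP[/eqP-> /eqP->] /andP[/eqP-> /eqP->]];
     rewrite !eqxx.
rewrite /kron summxE (big_only1 p) // => [|p' p'p _]; last first.
  rewrite summxE big1 // => q' _; rewrite summxE big1 // => i' _.
  by rewrite summxE big1 // => j' _; rewrite mxE delta_off ?p'p ?mulr0.
rewrite summxE (big_only1 q) // => [|q' q'q _]; last first.
  rewrite summxE big1 // => i' _; rewrite summxE big1 // => j' _.
  by rewrite mxE delta_off ?q'q ?orbT ?mulr0.
rewrite summxE (big_only1 i) // => [|i' i'i _]; last first.
  by rewrite summxE big1 // => j' _; rewrite mxE delta_off ?i'i ?orbT ?mulr0.
rewrite summxE (big_only1 j) // => [|j' j'j _]; last first.
  by rewrite mxE delta_off ?j'j ?orbT ?mulr0.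
by rewrite !mxE !eqxx mulr1.
Qed.

Lemma mul_kron_vec (A B : 'M[R]_n) X : kron A B *m vec X = vec (B *m X *m A^T).
Proof.
apply: cV_mxvec_indexP => p a; rewrite mulmx_vecE vecE !mxE.
under eq_bigr => q _ do under eq_bigr => b _ do rewrite kronE.
apply: eq_bigr => q _; rewrite !mxE big_distrl /=.
by apply: eq_bigr => b _; rewrite ?mxE; ring.
Qed.

Lemma commPiE p a q b :
  commPi R n (mxvec_index p a) (mxvec_index q b) = ((p == b) && (a == q))%:R.
Proof.
rewrite /commPi summxE (big_only1 p) // => [|p' p'p _]; last first.
  rewrite summxE big1 // => a' _.
  by rewrite mxE eq_mxvec_index eq_sym (negPf p'p).
rewrite summxE (big_only1 a) // => [|a' a'a _]; last first.
  by rewrite mxE !eq_mxvec_index [a == a']eq_sym (negPf a'a) andbF.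
by rewrite mxE !eq_mxvec_index !eqxx /= andbC [q == a]eq_sym [b == p]eq_sym.
Qed.

Lemma mul_commPi_vec X : commPi R n *m vec X = vec X^T.
Proof.
apply: cV_mxvec_indexP => p a; rewrite mxE big_mxvec_index vecE mxE.
rewrite (big_only1 a) // => [|q qa _]; last first.
  rewrite big1 // => b _.
  by rewrite commPiE [a == q]eq_sym (negPf qa) andbF mul0r.
rewrite (big_only1 p) // => [|b bp _]; last first.
  by rewrite commPiE eq_sym (negPf bp) mul0r.
by rewrite commPiE !eqxx mul1r vecE.
Qed.

Lemma mul_commPik k (v : 'cV[R]_(n * n)) :
  commPik R k *m v = \col_a v (mxvec_index k a) 0.
Proof.
apply/matrixP => a j; rewrite [j]ord1 !mxE big_mxvec_index.
rewrite (big_only1 k) // => [|q qk _]; last first.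
  rewrite big1 // => b _; rewrite /commPik summxE big1 ?mul0r // => i _.
  by rewrite mxE eq_mxvec_index (negPf qk) andbF.
rewrite (big_only1 a) // => [|b ba _]; last first.
  rewrite /commPik summxE big1 ?mul0r // => i _.
  rewrite mxE eq_mxvec_index eqxx.
  by case: (eqVneq a i) => [<-|]; rewrite ?(negPf ba) ?andbF.
rewrite /commPik summxE (big_only1 a) // => [|i ia _]; last first.
  by rewrite mxE eq_sym (negPf ia).
by rewrite mxE !eqxx mul1r.
Qed.

Lemma mul_commPik_vec k X : commPik R k *m vec X = X *m ev k.
Proof.
by rewrite mul_commPik; apply/matrixP => a j; rewrite [j]ord1 mxE vecE mul_evE.
Qed.

Lemma mul_commPik_mulmx_vec Z p X :
  commPik R p *m (Z *m vec X) = \sum_(q < n) blk Z p q *m (X *m ev q).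
Proof.
rewrite mul_commPik; apply/matrixP => a j.
rewrite [j]ord1 mxE mulmx_vecE summxE.
apply: eq_bigr => q _; rewrite mxE; apply: eq_bigr => b _.
by rewrite mul_evE mxE.
Qed.

Lemma set_col_ev (A : 'M[R]_n) k v q :
  set_col A k v *m ev q = if q == k then v else A *m ev q.
Proof.
apply/matrixP => a j; rewrite [j]ord1 mul_evE mxE.
by case: eqP => _; rewrite ?mul_evE.
Qed.

Lemma set_col_id (A : 'M[R]_n) k : set_col A k (A *m ev k) = A.
Proof.
by apply/matrixP => a b; rewrite mxE; case: eqP => [->|_]; rewrite ?mul_evE.
Qed.

End Vectorization.

Section DotProduct.
Variables (R : comPzRingType) (m : nat).
Implicit Types (u v w : 'cV[R]_m) (A : 'M[R]_m).

Definition dot u v : R := (u^T *m v) 0 0.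

Lemma dotC u v : dot u v = dot v u.
Proof. by rewrite /dot -[v^T *m u]trmxK trmx_mul !trmxK [RHS]mxE. Qed.

Lemma dot_mulmxr u A v : dot u (A *m v) = dot (A^T *m u) v.
Proof. by rewrite /dot trmx_mul trmxK mulmxA. Qed.

Lemma dotDr u v w : dot u (v + w) = dot u v + dot u w.
Proof. by rewrite /dot mulmxDr mxE. Qed.

Lemma dotNr u v : dot u (- v) = - dot u v.
Proof. by rewrite /dot mulmxN mxE. Qed.

Lemma dotBr u v w : dot u (v - w) = dot u v - dot u w.
Proof. by rewrite dotDr dotNr. Qed.

Lemma dotZr c u v : dot u (c *: v) = c * dot u v.
Proof. by rewrite /dot -scalemxAr mxE. Qed.

Lemma dot0r u : dot u 0 = 0.
Proof. by rewrite /dot mulmx0 mxE. Qed.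

Lemma dotDl u v w : dot (v + w) u = dot v u + dot w u.
Proof. by rewrite dotC dotDr !(dotC u). Qed.

Lemma dotZl c u v : dot (c *: v) u = c * dot v u.
Proof. by rewrite dotC dotZr dotC. Qed.

Lemma dot_sym_mx A u v : A^T = A -> dot u (A *m v) = dot v (A *m u).
Proof. by move=> sA; rewrite dot_mulmxr sA dotC. Qed.

End DotProduct.

Section QuadraticMaximum.
Variables (R : realFieldType) (m : nat).
Implicit Types (u v : 'cV[R]_m).

Lemma dot_ge0 v : 0 <= dot v v.
Proof. by rewrite /dot mxE; apply: sumr_ge0 => i _; rewrite mxE sqr_ge0. Qed.

Lemma dot_eq0 v : (dot v v == 0) = (v == 0).
Proof.
apply/eqP/eqP => [vv0|->]; last exact: dot0r.
have /psumr_eq0P v2_eq0 : \sum_(i < m) v i 0 ^+ 2 = 0.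
  by rewrite -[RHS]vv0 /dot mxE; apply: eq_bigr => i _; rewrite mxE expr2.
apply/matrixP => i j; rewrite [j]ord1 mxE.
by apply/eqP; rewrite -sqrf_eq0 v2_eq0 // => k _; apply: sqr_ge0.
Qed.

(* A maximum of [f] at [x0] forces the gradient [g] to vanish, by moving
   from [x0] a small step [t] along [g]. *)
Lemma quadratic_max_iff (f q : 'cV[R]_m -> R) (g x0 : 'cV[R]_m) :
  (forall d, 0 <= q d) -> (forall t d, q (t *: d) = t ^+ 2 * q d) ->
  (forall d, f (x0 + d) = f x0 + dot d g - q d) ->
  (forall x, f x <= f x0) <-> g = 0.
Proof.
move=> q_ge0 qZ f_expand; split => [f_max|g0 x]; last first.
  by rewrite -(subrKC x0 x) f_expand g0 dot0r addr0 lerBlDr lerDl.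
apply/eqP; rewrite -dot_eq0 eq_le dot_ge0 andbT leNgt; apply/negP => a_gt0.
set a := dot g g in a_gt0; set b := q g.
have b_ge0 : 0 <= b := q_ge0 g.
set t := a / (b + 1).
have t_gt0 : 0 < t by rewrite divr_gt0 // ltr_wpDl.
have tb1 : t * (b + 1) = a by rewrite divfK // gt_eqF // ltr_wpDl.
have := f_max (x0 + t *: g); rewrite f_expand qZ dotZl -/a -/b => step.
have a_le : a <= t * b.
  by rewrite -(ler_pM2l t_gt0) mulrA -expr2; lra.
have : a * (b + 1) <= t * b * (b + 1) by rewrite ler_pM2r // ltr_wpDl.
rewrite mulrAC tb1; nra.
Qed.

Lemma payoff_max_iff (A Sg : 'M[R]_m) (g : R) (c mu x0 : 'cV[R]_m)
    (f : 'cV[R]_m -> R) :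
  Sg^T = Sg ->
  (forall d, 0 <= dot d ((A + A^T - (2%:R * g) *: (A^T *m Sg *m A)) *m d)) ->
  (forall x, f x = dot (A *m x + c) (mu - x)
                   + g * dot (A *m x + c) (Sg *m (A *m x + c))) ->
  (forall x, f x <= f x0) <->
  (A + A^T - (2%:R * g) *: (A^T *m Sg *m A)) *m x0
    + (1%:M - (2%:R * g) *: (A^T *m Sg)) *m c = A^T *m mu.
Proof.
move=> sSg H_psd f_def.
set H := A + A^T - _; set B := 1%:M - _.
pose q d := dot (A *m d) d - g * dot (A *m d) (Sg *m (A *m d)).
have H_q d : dot d (H *m d) = 2%:R * q d.
  rewrite /H /q !mulmxDl mulNmx -!scalemxAl -!mulmxA dotBr dotDr dotZr.
  by rewrite !(dot_mulmxr d A^T) trmxK (dotC d); ring.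
set y := A *m x0 + c.
have grad : A^T *m (mu - x0) - y + (2%:R * g) *: (A^T *m (Sg *m y))
            = A^T *m mu - (H *m x0 + B *m c).
  rewrite /y /H /B !mulmxDl ?mulNmx ?mulmxBl !mulmxDr ?mulmxN ?mulmxBr.
  rewrite -!scalemxAl mul1mx -!mulmxA.
  by apply/matrixP => i j; rewrite !mxE; ring.
have expand d :
    f (x0 + d) = f x0 + dot d (A^T *m mu - (H *m x0 + B *m c)) - q d.
  have yd : A *m (x0 + d) + c = y + A *m d by rewrite mulmxDr addrAC.
  rewrite !f_def yd -/y -grad /q opprD addrA.
  rewrite !(mulmxDr, mulmxN, dotDl, dotDr, dotNr, dotZr).
  rewrite !(dot_mulmxr d A^T) trmxK !(dotC d).
  rewrite (dot_sym_mx (A *m x0) (A *m d) sSg) (dot_sym_mx c (A *m d) sSg).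
  ring.
have q_ge0 d : 0 <= q d.
  by rewrite -(@pmulr_rge0 _ 2%:R) // -H_q.
have qZ t d : q (t *: d) = t ^+ 2 * q d.
  by rewrite /q -!scalemxAr !(dotZl, dotZr); ring.
rewrite (quadratic_max_iff q_ge0 qZ expand).
by split=> [/eqP|->]; rewrite ?subrr // subr_eq0 eq_sym => /eqP.
Qed.

End QuadraticMaximum.

Section StablePoint.
Variables (R : realFieldType) (n : nat) (Sigma : 'M[R]_n) (gamma : 'I_n -> R).
Hypothesis Sigma_sym : Sigma^T = Sigma.
Hypothesis Sigma_pd : forall x : 'cV[R]_n, x != 0 -> 0 < (x^T *m Sigma *m x) 0 0.
Hypothesis gamma_gt0 : forall i, 0 < gamma i.

Local Notation G := (Gam gamma).
Local Notation K := (Kmx Sigma gamma).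
Local Notation L := (Lmx Sigma gamma).
Local Notation W := (stableW Sigma gamma).

Lemma Sigma_form_ge0 y : 0 <= dot y (Sigma *m y).
Proof.
rewrite /dot mulmxA; have [->|y_neq0] := eqVneq y 0; last exact/ltW/Sigma_pd.
by rewrite mulmx0 mxE.
Qed.

Lemma Sigma_form_eq0 y : dot y (Sigma *m y) = 0 -> y = 0.
Proof.
rewrite /dot mulmxA => yy0; apply/eqP; apply: contraT => /Sigma_pd.
by rewrite yy0 ltxx.
Qed.

Lemma Gam_sym : G^T = G.
Proof. exact: tr_diag_mx. Qed.

Lemma mul_Gam_ev k : G *m ev k = gamma k *: ev k.
Proof.
rewrite mul_diag_mx; apply/matrixP => i j; rewrite !mxE.
by have [->|] := eqVneq i k; rewrite ?mulr1 ?mulr0.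
Qed.

Definition energy (V : 'M[R]_n) : R :=
  \sum_i gamma i * dot (V *m ev i) (Sigma *m (V *m ev i)).

Lemma energy_term_ge0 V i :
  0 <= gamma i * dot (V *m ev i) (Sigma *m (V *m ev i)).
Proof. by apply: mulr_ge0; [apply: ltW | apply: Sigma_form_ge0]. Qed.

Lemma energy_ge V k :
  gamma k * dot (V *m ev k) (Sigma *m (V *m ev k)) <= energy V.
Proof.
rewrite /energy (bigD1 k) //= lerDl.
by apply: sumr_ge0 => i _; apply: energy_term_ge0.
Qed.

Lemma energy_ge0 V : 0 <= energy V.
Proof. by apply: sumr_ge0 => i _; apply: energy_term_ge0. Qed.

Lemma energy_eq0 V : energy V = 0 -> V = 0.
Proof.
move/psumr_eq0P => /(_ (fun i _ => energy_term_ge0 V i)) V0.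
have Vcol0 i : V *m ev i = 0.
  apply: Sigma_form_eq0; apply/eqP.
  by have /eqP := V0 i isT; rewrite mulf_eq0 gt_eqF.
by apply/matrixP => a b; rewrite -mul_evE Vcol0 !mxE.
Qed.

Lemma mxtrace_Gam_form V : \tr (G *m (V^T *m Sigma *m V)) = energy V.
Proof.
rewrite mul_diag_mx /mxtrace; apply: eq_bigr => i _.
rewrite /dot trmx_mul !mulmxA -[_ *m V^T *m Sigma]mulmxA.
by rewrite -[_ *m (V^T *m Sigma) *m V]mulmxA evT_mulmx_evE !mxE.
Qed.

Definition lyap (V : 'M[R]_n) : 'M[R]_n := Sigma *m V *m G + G *m V *m Sigma.

Lemma mul_Kmx_vec V : K *m vec V = vec (lyap V).
Proof. by rewrite /Kmx mulmxDl !mul_kron_vec Gam_sym Sigma_sym vecD. Qed.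

Lemma lyap_tr V : lyap V^T = (lyap V)^T.
Proof.
by rewrite /lyap linearD /= !trmx_mul Gam_sym Sigma_sym !mulmxA addrC.
Qed.

Lemma mxtrace_lyap V : \tr (V^T *m lyap V) = energy V + energy V^T.
Proof.
rewrite -!mxtrace_Gam_form trmxK /lyap mulmxDr mxtraceD !mulmxA.
congr (_ + _); first by rewrite mxtrace_mulC !mulmxA.
by rewrite -!mulmxA mxtrace_mulC !mulmxA.
Qed.

Lemma Kmx_unit : K \in unitmx.
Proof.
rewrite -unitmx_tr unitmxE unitfE; apply/negP => /det0P [v v_neq0 vK].
pose V := unvec v^T.
have lyapV0 : lyap V = 0.
  apply: vec_inj; rewrite -mul_Kmx_vec vecK.
  by rewrite -[K]trmxK -trmx_mul vK trmx0 vec0.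
have energyV0 : energy V = 0.
  have := mxtrace_lyap V; rewrite lyapV0 mulmx0 mxtrace0 => /esym/eqP.
  by rewrite paddr_eq0 ?energy_ge0 // => /andP[/eqP].
move/eqP: v_neq0; apply.
by rewrite -[v]trmxK -(vecK v^T) -/V (energy_eq0 energyV0) vec0 trmx0.
Qed.

Lemma lyap_stableW X : lyap (W X) = 2^-1 *: (X + X^T).
Proof.
apply: vec_inj; rewrite -mul_Kmx_vec /stableW vecK -scalemxAr mulmxA.
by rewrite mulmxV ?Kmx_unit // mul1mx vecZ.
Qed.

Lemma stableW_sym X : (W X)^T = W X.
Proof.
apply: vec_inj; apply: (can_inj (mulKmx Kmx_unit)); rewrite !mul_Kmx_vec.
by rewrite lyap_tr lyap_stableW linearZ linearD /= trmxK addrC.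
Qed.

Lemma vec_stableW X : vec (W X) = L *m vec X.
Proof.
rewrite /stableW vecK /Lmx vecD -mul_commPi_vec.
by rewrite -!scalemxAl mulmxDl mulmxDr mulmxA.
Qed.

Lemma stableW_col X k : W X *m ev k = \sum_(q < n) blk L k q *m (X *m ev q).
Proof. by rewrite -mul_commPik_vec vec_stableW mul_commPik_mulmx_vec. Qed.

Lemma stableP_col X k :
  stableP Sigma gamma X *m ev k
  = X *m ev k - (2%:R * gamma k) *: (Sigma *m (W X *m ev k)).
Proof.
by rewrite /stableP mulmxBl -!scalemxAl -!mulmxA mul_Gam_ev -!scalemxAr scalerA.
Qed.

Lemma util_atE M X k :
  util_at Sigma gamma M k X =
  dot (W X *m ev k) (M *m ev k - X *m ev k)
  + gamma k * dot (W X *m ev k) (Sigma *m (W X *m ev k)).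
Proof.
rewrite /util_at /utility stableP_col -mulmxA -!/(dot _ _) !dotBr dotZr.
by rewrite /dot mulmxA; ring.
Qed.

Lemma mxtrace_mul_stableW X : \tr (X^T *m W X) = 2%:R * energy (W X).
Proof.
have trXW : \tr (X^T *m W X) = \tr ((W X)^T *m lyap (W X)).
  rewrite lyap_stableW stableW_sym -scalemxAr mxtraceZ mulmxDr mxtraceD.
  rewrite -[\tr (W X *m X)]mxtrace_tr trmx_mul stableW_sym mxtrace_mulC.
  by rewrite [\tr (W X *m X^T)]mxtrace_mulC; field.
by rewrite trXW mxtrace_lyap stableW_sym; ring.
Qed.

Lemma Tblk_diag_psd k x : 0 <= dot x (Tblk Sigma gamma k k *m x).
Proof.
rewrite /Tblk eqxx; set A := blk L k k.
pose X := x *m (ev k)^T.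
have X_col q : X *m ev q = if q == k then x else 0.
  rewrite -mulmxA trmx_delta mul_delta_mx_cond eq_sym.
  case: eqP => _; rewrite ?mulr0n ?mulmx0 // mulr1n.
  by apply/matrixP => i j; rewrite [j]ord1 mxE big_ord1 mxE mulr1.
set w := W X *m ev k.
have wE : w = A *m x.
  rewrite /w stableW_col (bigD1 k) //= X_col eqxx big1 ?addr0 // => q /negPf qk.
  by rewrite X_col qk mulmx0.
have xw : dot x w = 2%:R * energy (W X).
  rewrite -mxtrace_mul_stableW /X trmx_mul trmxK -mulmxA mxtrace_mulC.
  by rewrite /mxtrace big_ord1 -mulmxA.
have w_le := energy_ge (W X) k; rewrite -/w in w_le.
have gk := gamma_gt0 k; have w_ge0 := Sigma_form_ge0 w.
rewrite !mulmxDl mulNmx -!scalemxAl -!mulmxA dotBr dotDr dotZr.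
rewrite !(dot_mulmxr x A^T) trmxK (dotC _ x) -wE xw.
nra.
Qed.

Section BestResponse.
Variables (M M0 : 'M[R]_n) (k : 'I_n).

Local Notation A := (blk L k k).
Local Notation B := (1%:M - (2%:R * gamma k) *: ((blk L k k)^T *m Sigma)).
Local Notation others := (\sum_(q < n | q != k) blk L k q *m (M0 *m ev q)).

Lemma stableW_set_col_ev x : W (set_col M0 k x) *m ev k = A *m x + others.
Proof.
rewrite stableW_col (bigD1 k) //= set_col_ev eqxx; congr (_ + _).
by apply: eq_bigr => q /negPf qk; rewrite set_col_ev qk.
Qed.

Lemma best_response_iff :
  (forall mu', util_at Sigma gamma M k (set_col M0 k mu')
               <= util_at Sigma gamma M k M0) <->
  Tblk Sigma gamma k k *m (M0 *m ev k) + B *m others = A^T *m (M *m ev k).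
Proof.
have := @payoff_max_iff _ _ A Sigma (gamma k) others (M *m ev k)
  (M0 *m ev k) (fun x => util_at Sigma gamma M k (set_col M0 k x)) Sigma_sym.
rewrite /= set_col_id /Tblk eqxx; apply.
  by move=> d; have := Tblk_diag_psd k d; rewrite /Tblk eqxx.
by move=> x; rewrite util_atE stableW_set_col_ev set_col_ev eqxx.
Qed.

End BestResponse.

Lemma yvecE M k : yvec Sigma gamma M k =
  - ((1%:M - (2%:R * gamma k) *: ((blk L k k)^T *m Sigma))
       *m \sum_(q < n) blk L k q *m (M *m ev q)).
Proof.
have KvecM : invmx K *m vec (M + M^T) = 2%:R *: vec (W M).
  by rewrite /stableW vecK scalerA divff ?scale1r // pnatr_eq0.
rewrite /yvec -!mulmxA KvecM -!scalemxAr mul_commPik_vec scalerA.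
by rewrite mulVf ?pnatr_eq0 // scale1r stableW_col -mulNmx opprB.
Qed.

Lemma best_response_system_iff M Delta (S : {set 'I_n}) k :
  (forall j, j \notin S -> Delta *m ev j = 0) ->
  (Tblk Sigma gamma k k *m ((M + Delta) *m ev k)
   + (1%:M - (2%:R * gamma k) *: ((blk L k k)^T *m Sigma))
      *m (\sum_(q < n | q != k) blk L k q *m ((M + Delta) *m ev q))
   = (blk L k k)^T *m (M *m ev k))
  <->
  (Tblk Sigma gamma k k *m (Delta *m ev k)
   + \sum_(j in S | j != k) Tblk Sigma gamma k j *m (Delta *m ev j)
   = yvec Sigma gamma M k).
Proof.
move=> Delta_S.
set A := blk L k k; set B := 1%:M - _.
set u := \sum_(q < n | q != k) blk L k q *m (M *m ev q).
set v := \sum_(q < n | q != k) blk L k q *m (Delta *m ev q).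
have uv : \sum_(q < n | q != k) blk L k q *m ((M + Delta) *m ev q) = u + v.
  by rewrite -big_split; apply: eq_bigr => q _; rewrite mulmxDl mulmxDr.
have Bv :
    \sum_(j in S | j != k) Tblk Sigma gamma k j *m (Delta *m ev j) = B *m v.
  rewrite mulmx_sumr big_mkcond [RHS]big_mkcond; apply: eq_bigr => j _ /=.
  case: (boolP (j \in S)) => [_|/Delta_S ->] /=.
    by case: eqP => //= /eqP jk; rewrite /Tblk (negPf jk) -mulmxA.
  by case: ifP; rewrite ?mulmx0.
have Tkk : Tblk Sigma gamma k k = A^T + B *m A.
  rewrite /Tblk eqxx -/A /B mulmxBl mul1mx -scalemxAl.
  by apply/matrixP => i j; rewrite !mxE; ring.
have yE : yvec Sigma gamma M k = - (B *m (A *m (M *m ev k) + u)).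
  by rewrite yvecE (bigD1 k).
rewrite uv Bv yE Tkk; apply: iff_eq_subr.
rewrite !mulmxDl !mulmxDr -!mulmxA; apply/matrixP => i j; rewrite !mxE; ring.
Qed.

End StablePoint.

Theorem mainTheorem7 (R : realFieldType) (n : nat)
  (Sigma : 'M[R]_n) (gamma : 'I_n -> R) (M : 'M[R]_n) (S : {set 'I_n})
  (Delta : 'M[R]_n) :
  Sigma^T = Sigma ->
  (forall x : 'cV[R]_n, x != 0 -> 0 < (x^T *m Sigma *m x) 0 0) ->
  (forall i, 0 < gamma i) ->
  (forall j, j \notin S -> Delta *m ev j = 0) ->
  (NashEq Sigma gamma M S Delta <->
   forall k, k \in S ->
     Tblk Sigma gamma k k *m (Delta *m ev k)
     + \sum_(j in S | j != k) Tblk Sigma gamma k j *m (Delta *m ev j)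
     = yvec Sigma gamma M k).
Proof.
move=> Sigma_sym Sigma_pd gamma_gt0 Delta_S.
have agent_iff k :
    (forall mu', util_at Sigma gamma M k (set_col (M + Delta) k mu')
                 <= util_at Sigma gamma M k (M + Delta)) <->
    Tblk Sigma gamma k k *m (Delta *m ev k)
    + \sum_(j in S | j != k) Tblk Sigma gamma k j *m (Delta *m ev j)
    = yvec Sigma gamma M k.
  rewrite best_response_iff //; exact: best_response_system_iff.
split=> [[_ Nash] k kS | system]; first exact/agent_iff/Nash.
by split=> // k kS; apply/agent_iff/system.
Qed.
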